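(* Let $X$ be a uniformly discrete metric space of bounded geometry which has property A. Then $\inf_{S>0}\epsilon_{X;1}(S)=0$.
   Context: A metric space is uniformly discrete if there is $r>0$ such that $d(x,y)<r$ implies $x=y$. For a metric space $(X,d)$ and $1\le p<\infty$, $\ell^p(X)$ is the space of $p$-summable real functions on $X$ and $\ell^p_1(X)$ its unit sphere. For a map $\xi\colon X\to\ell^p(X)$, written $x\mapsto\xi_x$, put $S(\xi)=\sup\{d(x,y):\xi_x(y)\neq0\}$ and $\varepsilon(\xi;p)=\sup_{x\ne y}\|\xi_x-\xi_y\|_p/d(x,y)$. The profile is $\epsilon_{X;p}(S)=\inf\{\varepsilon(\xi;p):\xi\colon X\to\ell^p_1(X),\ S(\xi)\le S\}$. A metric space has bounded geometry if for every $R$ there is $C$ such that every $R$-ball has at most $C$ points. A discrete metric space $X$ of bounded geometry has property A if for every $R>0$ and $\epsilon>0$ there is $\xi\colon X\to\ell^1_1(X)$ with $S(\xi)<\infty$ and $\|\xi_x-\xi_y\|_1\le\epsilon$ whenever $d(x,y)\le R$. *)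

From Stdlib Require Import Reals List.
From Coquelicot Require Import Coquelicot.
Open Scope R_scope.

Section Defs.
Context {X : Type}.

Definition is_metric (d : X -> X -> R) : Prop :=
  (forall x y, 0 <= d x y) /\
  (forall x y, d x y = 0 <-> x = y) /\
  (forall x y, d x y = d y x) /\
  (forall x y z, d x z <= d x y + d y z).

Definition uniformly_discrete (d : X -> X -> R) : Prop :=
  exists r, 0 < r /\ forall x y, d x y < r -> x = y.

Definition bounded_geometry (d : X -> X -> R) : Prop :=
  forall Rad : R, exists C : nat, forall (x : X) (l : list X),
    NoDup l -> (forall y, In y l -> d x y <= Rad) -> (length l <= C)%nat.

Definition abs_sum (f : X -> R) (l : list X) : R :=
  fold_right (fun y acc => Rabs (f y) + acc) 0 l.

(* the l^1 norm: sup over finite subsets of sum of |f|; +oo if f is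
   not summable *)
Definition l1norm (f : X -> R) : Rbar :=
  Lub_Rbar (fun s => exists l : list X, NoDup l /\ s = abs_sum f l).

Definition in_l1_sphere (f : X -> R) : Prop := l1norm f = Finite 1.

Definition xi_S (d : X -> X -> R) (xi : X -> X -> R) : Rbar :=
  Lub_Rbar (fun r => exists x y, xi x y <> 0 /\ r = d x y).

(* eps(xi;1) = sup_{x<>y} ||xi_x - xi_y||_1 / d(x,y); the value 0 is
   adjoined so that the sup over an empty index set (|X| <= 1) is 0 *)
Definition xi_eps1 (d : X -> X -> R) (xi : X -> X -> R) : Rbar :=
  Lub_Rbar (fun r => r = 0 \/ exists x y (n : R), x <> y /\
      l1norm (fun z => xi x z - xi y z) = Finite n /\ r = n / d x y).

Definition profile1 (d : X -> X -> R) (S : R) : Rbar :=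
  Glb_Rbar (fun e => exists xi : X -> X -> R,
      (forall x, in_l1_sphere (xi x)) /\
      Rbar_le (xi_S d xi) (Finite S) /\
      xi_eps1 d xi = Finite e).

Definition property_A (d : X -> X -> R) : Prop :=
  forall Rad eps : R, 0 < Rad -> 0 < eps ->
    exists xi : X -> X -> R,
      (forall x, in_l1_sphere (xi x)) /\
      Rbar_lt (xi_S d xi) p_infty /\
      (forall x y, d x y <= Rad ->
          Rbar_le (l1norm (fun z => xi x z - xi y z)) (Finite eps)).

End Defs.

(* A map xi with ||xi_x - xi_y||_1 <= eps whenever d(x,y) <= R, given by property A, has
   Lipschitz ratio at most eps/r on pairs at distance <= R (r the discreteness constant),
   and at most 2/R on the other pairs, since the xi_x are unit vectors.  Taking R = 2/delta
   and eps = delta r gives maps of finite support radius with eps(xi;1) <= delta. *)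
From Stdlib Require Import Reals List Lra.
From Coquelicot Require Import Coquelicot.
Open Scope R_scope.

Lemma Lub_Rbar_finite_le (E : R -> Prop) a B :
  E a -> (forall x, E x -> x <= B) -> exists e, Lub_Rbar E = Finite e /\ a <= e <= B.
Proof.
  intros Ea HB. destruct (Lub_Rbar_correct E) as [Hub Hleast].
  pose proof (Hub a Ea) as Hae. pose proof (Hleast (Finite B) HB) as HeB.
  destruct (Lub_Rbar E); simpl in *; try contradiction. eauto.
Qed.

Lemma Glb_Rbar_finite_ge (E : R -> Prop) a m :
  E a -> (forall x, E x -> m <= x) -> exists e, Glb_Rbar E = Finite e /\ m <= e <= a.
Proof.
  intros Ea Hm. destruct (Glb_Rbar_correct E) as [Hlb Hgreatest].
  pose proof (Hlb a Ea) as Hea. pose proof (Hgreatest (Finite m) Hm) as Hme.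
  destruct (Glb_Rbar E); simpl in *; try contradiction. eauto.
Qed.

Lemma Glb_Rbar_eq_0 (E : R -> Prop) :
  (forall x, E x -> 0 <= x) -> (forall delta, 0 < delta -> exists x, E x /\ x <= delta) ->
  Glb_Rbar E = Finite 0.
Proof.
  intros Hge0 Hsmall. apply is_glb_Rbar_unique. split.
  - intros x Ex. exact (Hge0 x Ex).
  - intros [b| |] Hb; simpl; auto.
    + destruct (Rle_or_lt b 0) as [Hb0|Hb0]; auto.
      destruct (Hsmall (b / 2)) as [x [Ex Hx]]; [lra|].
      specialize (Hb x Ex). simpl in Hb. lra.
    + destruct (Hsmall 1) as [x [Ex _]]; [lra|]. exact (Hb x Ex).
Qed.

Section L1.
Context {X : Type}.

Lemma sphere_abs_sum_le_1 (f : X -> R) l :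
  in_l1_sphere f -> NoDup l -> abs_sum f l <= 1.
Proof.
  intros Hf Hl. destruct (Lub_Rbar_correct
    (fun s => exists l : list X, NoDup l /\ s = abs_sum f l)) as [Hub _].
  unfold in_l1_sphere, l1norm in Hf. rewrite Hf in Hub. apply Hub. eauto.
Qed.

Lemma l1norm_le (f : X -> R) M :
  (forall l, NoDup l -> abs_sum f l <= M) -> Rbar_le (l1norm f) (Finite M).
Proof.
  intros HM. destruct (Lub_Rbar_correct
    (fun s => exists l : list X, NoDup l /\ s = abs_sum f l)) as [_ Hleast].
  apply Hleast. intros s [l [Hl ->]]. exact (HM l Hl).
Qed.

Lemma abs_sum_sub_le (f g : X -> R) l :
  abs_sum (fun z => f z - g z) l <= abs_sum f l + abs_sum g l.
Proof.
  induction l as [|a l IH]; simpl; [lra|].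
  pose proof (Rabs_triang (f a) (- g a)) as Htri. rewrite Rabs_Ropp in Htri.
  unfold Rminus in *. lra.
Qed.

Lemma l1norm_sub_sphere_le_2 (f g : X -> R) :
  in_l1_sphere f -> in_l1_sphere g -> Rbar_le (l1norm (fun z => f z - g z)) (Finite 2).
Proof.
  intros Hf Hg. apply l1norm_le. intros l Hl.
  pose proof (abs_sum_sub_le f g l).
  pose proof (sphere_abs_sum_le_1 f l Hf Hl).
  pose proof (sphere_abs_sum_le_1 g l Hg Hl). lra.
Qed.

End L1.

Section Profile.
Context {X : Type} (d : X -> X -> R).

Lemma xi_eps1_ge0 (xi : X -> X -> R) e : xi_eps1 d xi = Finite e -> 0 <= e.
Proof.
  intros He. destruct (Lub_Rbar_correct (fun r => r = 0 \/ exists x y (n : R), x <> y /\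
    l1norm (fun z => xi x z - xi y z) = Finite n /\ r = n / d x y)) as [Hub _].
  unfold xi_eps1 in He. rewrite He in Hub. apply Hub. auto.
Qed.

Lemma xi_eps1_le (xi : X -> X -> R) B : 0 <= B ->
  (forall x y n, x <> y -> l1norm (fun z => xi x z - xi y z) = Finite n -> n / d x y <= B) ->
  exists e, xi_eps1 d xi = Finite e /\ e <= B.
Proof.
  intros HB Hratio.
  destruct (Lub_Rbar_finite_le (fun r => r = 0 \/ exists x y (n : R), x <> y /\
    l1norm (fun z => xi x z - xi y z) = Finite n /\ r = n / d x y) 0 B)
    as [e [He [_ HeB]]]; eauto.
  intros r [->|[x [y [n [Hxy [Hn ->]]]]]]; eauto.
Qed.

Lemma profile1_ge0 S v : profile1 d S = Finite v -> 0 <= v.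
Proof.
  intros Hv. destruct (Glb_Rbar_correct (fun e => exists xi : X -> X -> R,
    (forall x, in_l1_sphere (xi x)) /\ Rbar_le (xi_S d xi) (Finite S) /\
    xi_eps1 d xi = Finite e)) as [_ Hgreatest].
  unfold profile1 in Hv. rewrite Hv in Hgreatest. apply (Hgreatest (Finite 0)).
  intros e [xi [_ [_ He]]]. exact (xi_eps1_ge0 xi e He).
Qed.

Lemma profile1_le (xi : X -> X -> R) S e :
  (forall x, in_l1_sphere (xi x)) -> Rbar_le (xi_S d xi) (Finite S) ->
  xi_eps1 d xi = Finite e -> exists v, profile1 d S = Finite v /\ v <= e.
Proof.
  intros Hsph HS He.
  destruct (Glb_Rbar_finite_ge (fun e => exists xi : X -> X -> R,
    (forall x, in_l1_sphere (xi x)) /\ Rbar_le (xi_S d xi) (Finite S) /\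
    xi_eps1 d xi = Finite e) e 0) as [v [Hv [_ Hve]]]; eauto.
  intros e' [xi' [_ [_ He']]]. exact (xi_eps1_ge0 xi' e' He').
Qed.

Lemma Rbar_lt_p_infty_le_pos_real (s : Rbar) :
  Rbar_lt s p_infty -> exists S, 0 < S /\ Rbar_le s (Finite S).
Proof.
  destruct s as [s| |]; simpl; intros Hs; try contradiction.
  - exists (Rmax s 1). split; [pose proof (Rmax_r s 1); lra | apply Rmax_l].
  - exists 1. split; [lra | exact I].
Qed.

Lemma property_A_small_eps1 r : 0 < r -> (forall x y, d x y < r -> x = y) ->
  property_A d -> forall delta, 0 < delta ->
  exists xi e, (forall x, in_l1_sphere (xi x)) /\ Rbar_lt (xi_S d xi) p_infty /\
    xi_eps1 d xi = Finite e /\ e <= delta.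
Proof.
  intros Hr Hdisc HA delta Hdelta.
  destruct (HA (2 / delta) (delta * r)) as [xi [Hsph [HS Hclose]]].
  { apply Rdiv_lt_0_compat; lra. }
  { apply Rmult_lt_0_compat; lra. }
  destruct (xi_eps1_le xi delta) as [e [He HeB]]; [lra| |eauto 6].
  intros x y n Hxy Hn.
  assert (Hrd : r <= d x y).
  { destruct (Rlt_or_le (d x y) r) as [Hlt|Hle]; auto. exfalso. auto. }
  apply Rle_div_l; [lra|].
  destruct (Rle_or_lt (d x y) (2 / delta)) as [Hnear|Hfar].
  - pose proof (Hclose x y Hnear) as Hn'. rewrite Hn in Hn'. simpl in Hn'.
    pose proof (Rmult_le_compat_l delta r (d x y) (Rlt_le _ _ Hdelta) Hrd). lra.
  - pose proof (l1norm_sub_sphere_le_2 (xi x) (xi y) (Hsph x) (Hsph y)) as Hn2.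
    rewrite Hn in Hn2. simpl in Hn2.
    pose proof (Rmult_lt_compat_l delta _ _ Hdelta Hfar) as Hfar'.
    replace (delta * (2 / delta)) with 2 in Hfar' by (field; lra). lra.
Qed.

End Profile.

Theorem proposition2p1p7 (X : Type) (d : X -> X -> R) :
  is_metric d -> uniformly_discrete d -> bounded_geometry d -> property_A d ->
  Glb_Rbar (fun v => exists S : R, 0 < S /\ profile1 d S = Finite v) = Finite 0.
Proof.
  intros _ [r [Hr Hdisc]] _ HA. apply Glb_Rbar_eq_0.
  - intros v [S [_ Hv]]. exact (profile1_ge0 d S v Hv).
  - intros delta Hdelta.
    destruct (property_A_small_eps1 d r Hr Hdisc HA delta Hdelta)
      as [xi [e [Hsph [HS [He Hedelta]]]]].
    destruct (Rbar_lt_p_infty_le_pos_real _ HS) as [S [HSpos HSle]].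
    destruct (profile1_le d xi S e Hsph HSle He) as [v [Hv Hve]].
    exists v. split; [exists S; auto | lra].
Qed.
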